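(* Let $S$ be a finite non-empty set and $\Sigma\subseteq\mathbb{R}_+\times S$ locally finite, and let $(X_n,\eta_n)$ be a time-homogeneous irreducible Markov chain on $\Sigma$ such that every line $\Lambda_k=\{x:(x,k)\in\Sigma\}$ is unbounded. Suppose that for some $p>2$ there is $C_p<\infty$ with $\mathbb{E}_{x,i}[|X_{n+1}-X_n|^p]\le C_p$ for all $(x,i)\in\Sigma$; that $q_{ij}(x)\to q_{ij}$ as $x\to\infty$ with $(q_{ij})$ an irreducible stochastic matrix; and that there exist $c_i\in\mathbb{R}$, $s_i^2\ge0$ (at least one $s_i^2\ne0$) with $\mu_i(x)=c_i/x+o(x^{-1})$ and $\sigma_i^2(x)=s_i^2+o(1)$ as $x\to\infty$. Let $b_i\in\mathbb{R}$, $i\in S$, let $\nu\in(0,p]$, let $f_\nu$ be as in the context, and set $Z_n:=(f_\nu(X_n,\eta_n))^{1/\nu}$. Then, as $x\to\infty$, \[\mathbb{E}_{x,i}[Z_{n+1}-Z_n]=\frac{c_i}x+\frac1{2x}\sum_{j\in S}(b_j-b_i)q_{ij}+o(x^{-1}),\] and there is a constant $B<\infty$ such that $\mathbb{E}_{x,i}[(Z_{n+1}-Z_n)^2]\le B$.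
   Context: Locally finite means $\Sigma\cap([0,r]\times S)$ is finite for every $r\ge0$. $\mathbb{E}_{x,i}[\cdot]=\mathbb{E}[\cdot\mid X_n=x,\eta_n=i]$; $q_{ij}(x)=\Pr[\eta_{n+1}=j\mid X_n=x,\eta_n=i]$; $\mu_i(x)=\mathbb{E}_{x,i}[X_{n+1}-X_n]$; $\sigma_i^2(x)=\mathbb{E}_{x,i}[(X_{n+1}-X_n)^2]$. $x_0:=1+\sqrt{|\nu|\max_i|b_i|}$ and $f_\nu(x,i)=x^\nu+\frac\nu2b_ix^{\nu-2}$ for $x\ge x_0$, $f_\nu(x,i)=x_0^\nu+\frac\nu2b_ix_0^{\nu-2}$ for $x<x_0$ (this is positive). *)

From HB Require Import structures.
From mathcomp Require Import all_boot all_order all_algebra.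
From mathcomp Require Import all_classical all_reals all_analysis.
From Stdlib Require Import Relations.
Set Implicit Arguments. Unset Strict Implicit. Unset Printing Implicit Defensive.
Import Order.TTheory GRing.Theory Num.Theory.
Local Open Scope classical_set_scope.
Local Open Scope ring_scope.

Section Defs.
Context {R : realType} {S : finType}.

(* A (time-homogeneous) Markov chain on Sigma is given by its one-step
   transition probabilities P z w = Pr[(X_{n+1},eta_{n+1}) = w | (X_n,eta_n) = z]. *)
Definition markov_kernel (Sigma : set (R * S)) (P : R * S -> R * S -> R) : Prop :=
  (forall z w, 0 <= P z w) /\
  (forall z w, Sigma z -> ~ Sigma w -> P z w = 0) /\
  (forall z, Sigma z -> (\esum_(w in Sigma) (P z w)%:E = 1)%E).

Definition irreducible_chain (Sigma : set (R * S)) (P : R * S -> R * S -> R) : Prop :=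
  forall z w, Sigma z -> Sigma w ->
    clos_refl_trans _
      (fun a b => Sigma a /\ Sigma b /\ 0 < P a b) z w.

Definition locally_finite (Sigma : set (R * S)) : Prop :=
  forall r : R, 0 <= r -> finite_set (Sigma `&` [set z | z.1 <= r]).

Definition Ex (Sigma : set (R * S)) (P : R * S -> R * S -> R) (z : R * S)
    (g : R * S -> R) : \bar R :=
  (\esum_(w in Sigma) (P z w * Num.max (g w) 0)%:E
   - \esum_(w in Sigma) (P z w * Num.max (- g w) 0)%:E)%E.

Definition qx (Sigma : set (R * S)) (P : R * S -> R * S -> R) (z : R * S) (j : S)
  : \bar R := \esum_(w in Sigma `&` [set w | w.2 = j]) (P z w)%:E.

Definition irreducible_stochastic (Q : S -> S -> R) : Prop :=
  (forall i j, 0 <= Q i j) /\ (forall i, \sum_(j : S) Q i j = 1) /\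
  (forall i j, connect (fun a b => 0 < Q a b) i j).

Definition x0 (nu : R) (b : S -> R) : R :=
  1 + Num.sqrt (`|nu| * \big[Num.max/0]_(i : S) `|b i|).

Definition f_nu (nu : R) (b : S -> R) (z : R * S) : R :=
  let x := Num.max z.1 (x0 nu b) in
  powR x nu + nu / 2 * b z.2 * powR x (nu - 2).

Definition Zfun (nu : R) (b : S -> R) (z : R * S) : R :=
  powR (f_nu nu b z) (nu^-1).

End Defs.

(* For large levels [f_nu] is [x^nu (1 + nu b_i / (2 x^2))], so
   [Z = x + b_i / (2 x) + O(x^-3)], while [Z(y, j) - y] stays bounded for all [y].
   Recentring this expansion at the current level [x] gives
   [Z_{n+1} - Z_n = (X_{n+1} - x) + (b_{eta_{n+1}} - b_i) / (2 x) + O((1 + (X_{n+1} - x)^2) / x^2)];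
   the [p]-th moment bound ([p >= 2]) makes the error term [O(x^-2)] in expectation, and
   [q_ij(x) -> q_ij] turns the middle term into the announced drift.  The second moment is
   bounded because [Z_{n+1} - Z_n] differs from [X_{n+1} - X_n] by a bounded amount. *)

From HB Require Import structures.
From mathcomp Require Import all_boot all_order all_algebra.
From mathcomp Require Import all_classical all_reals all_analysis.
From mathcomp Require Import ring lra.
Import Order.TTheory GRing.Theory Num.Theory.
Local Open Scope classical_set_scope.
Local Open Scope ring_scope.

Section elementary_bounds.
Context {R : realType}.
Implicit Types a p t u : R.

Lemma ln1Dx_ge u : `|u| <= 2^-1 -> u - 2 * u ^+ 2 <= ln (1 + u).
Proof.
rewrite ler_norml => /andP[u_ge u_le].
have u1_gt0 : 0 < 1 + u by lra.
set v := (1 + u)^-1.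
have v_u1 : v * (1 + u) = 1 by rewrite mulVf ?gt_eqF.
have v_gt0 : 0 < v by rewrite invr_gt0.
have : ln v <= v - 1 by rewrite -[X in ln X](subrKC 1) le_ln1Dx //; lra.
rewrite lnV ?posrE // => ln_v.
have : 0 <= u ^+ 2 * (1 + 2 * u) by apply: mulr_ge0; [exact: sqr_ge0 | lra].
nra.
Qed.

Lemma expR_le1D_sqr t : t <= 2^-1 -> expR t <= 1 + t + 2 * t ^+ 2.
Proof.
move=> t_le.
have expRN : expR t * expR (- t) = 1 by rewrite -expRD subrr expR0.
have := expR_ge1Dx (- t); have := expR_gt0 t.
have : 0 <= t ^+ 2 * (1 - 2 * t) by apply: mulr_ge0; [exact: sqr_ge0 | lra].
nra.
Qed.

(* [t := a ln (1 + u)] lies within [2 a u^2] below [a u], and [1 + t <= e^t <= 1 + t + 2 t^2]. *)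
Lemma powR1D_taylor [a u] : 0 < a -> `|u| <= 2^-1 -> 2 * a * `|u| <= 2^-1 ->
  `|(1 + u) `^ a - 1 - a * u| <= (8 * a ^+ 2 + 2 * a) * u ^+ 2.
Proof.
move=> a_gt0 u_small au_small.
have [u_ge u_le] : - 2^-1 <= u /\ u <= 2^-1 by apply/andP; rewrite -ler_norml.
rewrite /powR gt_eqF; last lra.
set t := a * ln (1 + u).
have t_le : t <= a * u by rewrite ler_pM2l // le_ln1Dx //; lra.
have t_ge : a * (u - 2 * u ^+ 2) <= t by rewrite ler_pM2l // ln1Dx_ge.
have u_sqr : u ^+ 2 = `|u| ^+ 2 by rewrite real_normK ?num_real.
have au_le : a * u <= a * `|u| by rewrite ler_pM2l // ler_norm.
have au_ge : - (a * `|u|) <= a * u by rewrite -mulrN ler_pM2l // lerNl -normrN ler_norm.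
have au2_le : 2 * a * u ^+ 2 <= a * `|u| by rewrite u_sqr; nra.
have t_sqr : t ^+ 2 <= 4 * a ^+ 2 * u ^+ 2.
  rewrite -[t ^+ 2]real_normK ?num_real // u_sqr.
  have : `|t| <= 2 * a * `|u| by rewrite ler_norml; apply/andP; split; nra.
  have := normr_ge0 t; nra.
have := expR_ge1Dx t.
have /expR_le1D_sqr : t <= 2^-1 by lra.
rewrite ler_norml => *; apply/andP; split; nra.
Qed.

Lemma sqr_le1D_powR p t : 2 <= p -> 0 <= t -> t ^+ 2 <= 1 + t `^ p.
Proof.
move=> p_ge2 t_ge0; have := powR_ge0 t p.
have [t_le1|t_gt1] := lerP t 1.
  have : t ^+ 2 <= 1 by rewrite expr_le1.
  lra.
have : t `^ 2 <= t `^ p by apply: ler_powR; lra.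
by rewrite -[2]/(2%:R) powR_mulrn //; lra.
Qed.

Lemma normr_le1D_sqr t : `|t| <= 1 + t ^+ 2.
Proof. by rewrite -real_normK ?num_real //; have := normr_ge0 t; nra. Qed.

Lemma recenter_le [K x y e beta : R] : 0 <= K -> 1 <= y -> 0 < x <= 2 * y ->
  `|e - beta / (2 * y)| <= K / y ^+ 3 ->
  `|e - beta / (2 * x)| * x ^+ 2 <= 4 * K + `|beta| * `|y - x|.
Proof.
move=> K_ge0 y_ge1 /andP[x_gt0 x_le] e_le.
have y_gt0 : 0 < y by lra.
have x2_gt0 : 0 < x ^+ 2 by rewrite exprn_gt0.
have xy_ge0 : 0 <= x / y / 2 by rewrite !divr_ge0 ?ltW.
have xy_le1 : x / y / 2 <= 1 by rewrite !ler_pdivrMr //; lra.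
have far_le : `|e - beta / (2 * y)| * x ^+ 2 <= 4 * K.
  apply: le_trans (ler_wpM2r (ltW x2_gt0) e_le) _.
  rewrite (_ : K / y ^+ 3 * x ^+ 2 = 4 * K * (x / y / 2) ^+ 2 / y); last by field; rewrite gt_eqF.
  rewrite ler_pdivrMr //; have : (x / y / 2) ^+ 2 <= 1 by rewrite expr_le1.
  by nra.
have shift_le : `|beta / (2 * y) - beta / (2 * x)| * x ^+ 2 <= `|beta| * `|y - x|.
  rewrite -(ger0_norm (ltW x2_gt0)) -normrM.
  rewrite (_ : (_ - _) * _ = x / y / 2 * (beta * (x - y)) :> R); last by field; rewrite !gt_eqF.
  rewrite normrM [`|beta * _|]normrM distrC (ger0_norm xy_ge0).
  by have := mulr_ge0 (normr_ge0 beta) (normr_ge0 (y - x)); nra.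
rewrite (_ : e - _ = e - beta / (2 * y) + (beta / (2 * y) - beta / (2 * x))); last by ring.
by apply: le_trans (ler_wpM2r (ltW x2_gt0) (ler_normD _ _)) _; lra.
Qed.

End elementary_bounds.

Section Zfun_estimates.
Local Set Implicit Arguments.
Local Unset Strict Implicit.
Context {R : realType} {S : finType}.
Variables (nu : R) (b : S -> R).

Let bmax : R := \big[Num.max/0]_i `|b i|.

Lemma bmax_ge j : `|b j| <= bmax.
Proof. by apply/bigmax_geP; right; exists j. Qed.

Lemma bmax_ge0 : 0 <= bmax.
Proof. by apply/bigmax_geP; left. Qed.

Lemma x0_ge1 : 1 <= x0 nu b.
Proof. by rewrite lerDl sqrtr_ge0. Qed.

Lemma x0_sqr_ge : `|nu| * bmax <= x0 nu b ^+ 2.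
Proof.
have nu_bmax_ge0 : 0 <= `|nu| * bmax by rewrite mulr_ge0 ?bmax_ge0.
rewrite /x0 -/bmax.
have := sqrtr_ge0 (`|nu| * bmax); have := sqr_sqrtr nu_bmax_ge0; nra.
Qed.

Lemma correction_le_half M j : x0 nu b <= M -> `|nu / 2 * b j / M ^+ 2| <= 2^-1.
Proof.
move=> x0_le_M.
have M_gt0 : 0 < M by have := x0_ge1; lra.
have M2_gt0 : 0 < M ^+ 2 by rewrite exprn_gt0.
rewrite !normrM !normfV (gtr0_norm M2_gt0) (gtr0_norm (_ : 0 < 2 :> R)) // ler_pdivrMr //.
have : x0 nu b ^+ 2 <= M ^+ 2 by rewrite ler_sqr // nnegrE; have := x0_ge1; lra.
have : `|nu| * `|b j| <= `|nu| * bmax by rewrite ler_wpM2l // bmax_ge.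
have := x0_sqr_ge; lra.
Qed.

Lemma Zfun_powR y j : nu != 0 -> Zfun nu b (y, j) =
  Num.max y (x0 nu b) * (1 + nu / 2 * b j / Num.max y (x0 nu b) ^+ 2) `^ nu^-1.
Proof.
move=> nu_neq0; set M := Num.max y (x0 nu b).
have M_gt0 : 0 < M by rewrite lt_max; apply/orP; right; have := x0_ge1; lra.
have f_nuE : f_nu nu b (y, j) = M `^ nu * (1 + nu / 2 * b j / M ^+ 2).
  rewrite /f_nu /= -/M powRB; last by rewrite (gt_eqF M_gt0) implybT.
  by rewrite (powR_mulrn 2 (ltW M_gt0)); field; rewrite gt_eqF // exprn_gt0.
have u_small : `|nu / 2 * b j / M ^+ 2| <= 2^-1.
  by apply: correction_le_half; rewrite le_max lexx orbT.
rewrite /Zfun f_nuE powRM ?powR_ge0 //; last by move: u_small; rewrite ler_norml; lra.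
by rewrite -powRrM mulfV // powRr1 ?ltW.
Qed.

Lemma Zfun_asymp : 0 < nu -> exists2 T : R, x0 nu b <= T & exists2 K : R, 0 <= K &
  forall (y : R) j, T <= y -> `|Zfun nu b (y, j) - y - b j / (2 * y)| <= K / y ^+ 3.
Proof.
move=> nu_gt0; have [x0_ge1 bmax_ge0] := (x0_ge1, bmax_ge0).
exists (x0 nu b + 2 * bmax); first lra.
exists ((2 + nu / 2) * bmax ^+ 2); first by rewrite mulr_ge0 ?sqr_ge0 //; lra.
move=> y j y_ge.
have y_gt0 : 0 < y by lra.
have y2_gt0 : 0 < y ^+ 2 by rewrite exprn_gt0.
have bmax_le : 2 * bmax <= y ^+ 2.
  have : y * 1 <= y * y by rewrite ler_pM2l //; lra.
  rewrite expr2; lra.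
rewrite Zfun_powR ?gt_eqF // (_ : Num.max y (x0 nu b) = y); last by apply/max_idPl; lra.
set u := nu / 2 * b j / y ^+ 2.
have u_small : `|u| <= 2^-1 by apply: correction_le_half; lra.
have au_small : 2 * nu^-1 * `|u| <= 2^-1.
  rewrite (_ : 2 * nu^-1 * `|u| = `|b j| / y ^+ 2); last first.
    rewrite /u !normrM !normfV (gtr0_norm y2_gt0) (gtr0_norm nu_gt0).
    by rewrite (gtr0_norm (_ : 0 < 2 :> R)) //; field; rewrite !gt_eqF.
  by rewrite ler_pdivrMr //; have := bmax_ge j; lra.
have nuV_gt0 : 0 < nu^-1 by rewrite invr_gt0.
have := powR1D_taylor nuV_gt0 u_small au_small.
rewrite (_ : _ - y - _ = y * ((1 + u) `^ nu^-1 - 1 - nu^-1 * u)); last first.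
  by rewrite /u; field; rewrite !gt_eqF.
rewrite normrM (gtr0_norm y_gt0) => /(ler_wpM2l (ltW y_gt0)) /le_trans; apply.
rewrite (_ : y * (_ * u ^+ 2) = (2 + nu / 2) * b j ^+ 2 / y ^+ 3); last first.
  by rewrite /u; field; rewrite !gt_eqF.
rewrite ler_pM2r ?invr_gt0 ?exprn_gt0 // ler_pM2l; last lra.
by rewrite -real_normK ?num_real // ler_sqr ?nnegrE ?bmax_ge.
Qed.

Lemma Zfun_subr_bounded : 0 < nu ->
  exists K : R, forall (y : R) j, 0 <= y -> `|Zfun nu b (y, j) - y| <= K.
Proof.
move=> nu_gt0; have [T x0_le_T [K K_ge0 Zfun_y]] := Zfun_asymp nu_gt0.
have [x0_ge1 bmax_ge0] := (x0_ge1, bmax_ge0).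
exists (Num.max (K + bmax) (T * (3 / 2) `^ nu^-1 + T)) => y j y_ge0.
rewrite le_max; have [T_le_y|y_lt_T] := lerP T y; apply/orP; [left|right].
  have y_ge1 : 1 <= y by lra.
  have K_le : K / y ^+ 3 <= K by rewrite ler_pdivrMr ?exprn_gt0 ?ler_peMr ?exprn_ege1 //; lra.
  have b_le : `|b j / (2 * y)| <= bmax.
    rewrite normrM normfV (gtr0_norm (_ : 0 < 2 * y)) ?ler_pdivrMr; last 2 first.
    - by rewrite mulr_gt0 //; lra.
    - by rewrite mulr_gt0 //; lra.
    by have := bmax_ge j; nra.
  have := ler_normD (Zfun nu b (y, j) - y - b j / (2 * y)) (b j / (2 * y)).
  by rewrite subrK; have := Zfun_y y j T_le_y; lra.
set M := Num.max y (x0 nu b).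
have M_le_T : M <= T by rewrite ge_max; apply/andP; split; lra.
have M_ge0 : 0 <= M by rewrite le_max; apply/orP; right; lra.
have : `|nu / 2 * b j / M ^+ 2| <= 2^-1 by rewrite correction_le_half // le_max lexx orbT.
rewrite Zfun_powR ?gt_eqF // -/M ler_norml => /andP[u_ge u_le].
set Z := _ `^ _.
have Z_le : Z <= (3 / 2) `^ nu^-1.
  by apply: ge0_ler_powR; rewrite ?invr_ge0 ?nnegrE; lra.
have : M * Z <= T * (3 / 2) `^ nu^-1 by apply: ler_pM; rewrite ?powR_ge0.
have : 0 <= M * Z by rewrite mulr_ge0 ?powR_ge0.
by rewrite ler_norml; move=> *; apply/andP; split; lra.
Qed.

Lemma Zfun_expansion : 0 < nu -> exists2 T : R, 1 <= T & exists A : R,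
  forall (x y : R) j, T <= x -> 0 <= y ->
  `|Zfun nu b (y, j) - y - b j / (2 * x)| <= A * (1 + (y - x) ^+ 2) / x ^+ 2.
Proof.
move=> nu_gt0; have [T x0_le_T [K K_ge0 Zfun_asymp_y]] := Zfun_asymp nu_gt0.
have [K' Zfun_y] := Zfun_subr_bounded nu_gt0.
have [x0_ge1 bmax_ge0] := (x0_ge1, bmax_ge0).
exists (2 * T); first lra.
exists (4 * K + bmax + 4 * (K' + bmax)) => x y j T_le_x y_ge0.
have K'_ge0 : 0 <= K' := le_trans (normr_ge0 _) (Zfun_y y j y_ge0).
have x_gt0 : 0 < x by lra.
have bj_le := bmax_ge j.
rewrite ler_pdivlMr ?exprn_gt0 //.
have d_sqr := normr_le1D_sqr (y - x).
(* Near [x] recentre [Zfun_asymp]; far from [x], [(y - x)^2 / x^2 > 1/4] absorbs the bounded error. *)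
have [d_le|d_gt] := lerP `|y - x| (x / 2).
  have y_ge : x / 2 <= y by move: d_le; rewrite ler_norml; lra.
  have x_le : 0 < x <= 2 * y by apply/andP; split; lra.
  have [y_ge1 T_le_y] : 1 <= y /\ T <= y by split; lra.
  have := recenter_le K_ge0 y_ge1 x_le (Zfun_asymp_y y j T_le_y).
  have := ler_pM (normr_ge0 _) (normr_ge0 _) (bmax_ge j) d_sqr.
  by have := sqr_ge0 (y - x); move=> *; nra.
have dx_sqr : x ^+ 2 <= 4 * (y - x) ^+ 2.
  rewrite -[(y - x) ^+ 2]real_normK ?num_real //.
  have := normr_ge0 (y - x); nra.
have E_le : `|Zfun nu b (y, j) - y - b j / (2 * x)| <= K' + bmax.
  apply: le_trans (ler_normB _ _) _.
  rewrite normrM normfV (gtr0_norm (_ : 0 < 2 * x)); last lra.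
  have : `|b j| / (2 * x) <= bmax by rewrite ler_pdivrMr; nra.
  by have := Zfun_y y j y_ge0; lra.
have := sqr_ge0 (y - x); have := normr_ge0 (Zfun nu b (y, j) - y - b j / (2 * x)); nra.
Qed.

End Zfun_estimates.

Section real_expectation.
Local Set Implicit Arguments.
Local Unset Strict Implicit.
Context {R : realType} {S : finType}.
Variables (Sigma : set (R * S)) (P : R * S -> R * S -> R) (z : R * S).
Hypothesis P_ge0 : forall w, 0 <= P z w.
Implicit Types g h k u v : R * S -> R.

Definition wesum h : \bar R := \esum_(w in Sigma) (P z w * h w)%:E.

Lemma wesum_ge0 h : (forall w, 0 <= h w) -> (0 <= wesum h)%E.
Proof. by move=> h_ge0; apply: esum_ge0 => w _; rewrite lee_fin mulr_ge0. Qed.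

Lemma le_wesum h k : (forall w, Sigma w -> h w <= k w) -> (wesum h <= wesum k)%E.
Proof. by move=> hk; apply: le_esum => w Sw; rewrite lee_fin ler_wpM2l ?hk. Qed.

Lemma eq_wesum h k : (forall w, Sigma w -> h w = k w) -> wesum h = wesum k.
Proof. by move=> hk; apply: eq_esum => w Sw; rewrite hk. Qed.

Lemma wesumD h k : (forall w, 0 <= h w) -> (forall w, 0 <= k w) ->
  wesum (h \+ k) = (wesum h + wesum k)%E.
Proof.
move=> h_ge0 k_ge0; rewrite /wesum -esumD => [|w _|w _]; rewrite ?lee_fin ?mulr_ge0 //.
by apply: eq_esum => w _; rewrite mulrDr EFinD.
Qed.

Lemma wesumZ c h : 0 <= c -> (forall w, 0 <= h w) ->
  wesum (fun w => c * h w) = (c%:E * wesum h)%E.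
Proof.
move=> c_ge0 h_ge0; rewrite /wesum /esum -ereal_supZl //; last first.
  by apply/set0P; exists 0%E, set0; [exact: fsets_set0 | rewrite fsbig_set0].
congr ereal_sup; apply/seteqP; split => x /=.
  move=> [A SA <-]; exists (\sum_(w \in A) (P z w * h w)%:E)%E; first by exists A.
  rewrite ge0_mule_fsumr => [|w]; last by rewrite lee_fin mulr_ge0.
  by apply: eq_fsbigr => w _; rewrite -EFinM mulrCA.
move=> [_ [A SA <-] <-]; exists A => //.
rewrite ge0_mule_fsumr => [|w]; last by rewrite lee_fin mulr_ge0.
by apply: eq_fsbigr => w _; rewrite -EFinM mulrCA.
Qed.

Lemma wesum_fin_num h k : (forall w, 0 <= h w) -> (forall w, Sigma w -> h w <= k w) ->
  wesum k \is a fin_num -> wesum h \is a fin_num.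
Proof.
move=> h_ge0 hk; have h_le := le_wesum hk; have h_ge := wesum_ge0 h_ge0.
rewrite !ge0_fin_numE ?(le_trans h_ge h_le) //; exact: le_lt_trans.
Qed.

Lemma Ex_split g u v : (forall w, 0 <= u w) -> (forall w, 0 <= v w) ->
  wesum u \is a fin_num -> wesum v \is a fin_num ->
  (forall w, Sigma w -> g w = u w - v w) ->
  Ex Sigma P z g = (fine (wesum u) - fine (wesum v))%:E.
Proof.
move=> u_ge0 v_ge0 u_fin v_fin guv.
have gp_fin : wesum g^\+ \is a fin_num.
  apply: wesum_fin_num u_fin => // w Sw.
  by rewrite /funrpos ge_max guv // u_ge0 andbT; have := v_ge0 w; lra.
have gn_fin : wesum g^\- \is a fin_num.
  apply: wesum_fin_num v_fin => // w Sw.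
  by rewrite /funrneg ge_max guv // v_ge0 andbT; have := u_ge0 w; lra.
have wesum_eq : wesum (g^\+ \+ v) = wesum (g^\- \+ u).
  apply: eq_wesum => w Sw; have := congr1 (@^~ w) (funrposBneg g).
  by rewrite /= !fctE guv //; lra.
rewrite !wesumD // -(fineK gp_fin) -(fineK gn_fin) -(fineK u_fin) -(fineK v_fin) -!EFinD in wesum_eq.
have {}wesum_eq := EFin_inj wesum_eq.
change (wesum (g^\+)%R - wesum (g^\-)%R = (fine (wesum u) - fine (wesum v))%:E)%E.
by rewrite -(fineK gp_fin) -(fineK gn_fin) -EFinB; congr EFin; lra.
Qed.

Let funrposBneg_at g w : g^\+ w - g^\- w = g w.
Proof. by have := congr1 (@^~ w) (funrposBneg g); rewrite /= !fctE. Qed.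

Definition Ex_summable g : bool := wesum (fun w => `|g w|) \is a fin_num.

(* [fine] sends infinite expectations to [0]: [Exr g] is meaningful only for [Ex_summable g]. *)
Definition Exr g : R := fine (Ex Sigma P z g).

Lemma Exr_split g u v : (forall w, 0 <= u w) -> (forall w, 0 <= v w) ->
  wesum u \is a fin_num -> wesum v \is a fin_num ->
  (forall w, Sigma w -> g w = u w - v w) ->
  Exr g = fine (wesum u) - fine (wesum v).
Proof. by move=> *; rewrite /Exr (@Ex_split g u v). Qed.

Lemma Ex_summable_posneg g : Ex_summable g ->
  wesum g^\+ \is a fin_num /\ wesum g^\- \is a fin_num.
Proof.
move=> g_sum; have := congr1 (@^~ _) (funrposDneg g) => /= gE.
by split; apply: wesum_fin_num g_sum => // w _; rewrite -gE /= !fctE;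
  [rewrite lerDl | rewrite lerDr].
Qed.

Lemma Exr_posneg g : Ex_summable g -> Exr g = fine (wesum g^\+) - fine (wesum g^\-).
Proof.
by move=> /Ex_summable_posneg[gp_fin gn_fin]; apply: Exr_split => // w _;
  rewrite funrposBneg_at.
Qed.

Lemma Ex_Exr g : Ex_summable g -> Ex Sigma P z g = (Exr g)%:E.
Proof.
move=> g_sum; have [gp_fin gn_fin] := Ex_summable_posneg g_sum.
rewrite (Exr_posneg g_sum); apply: Ex_split => // w _; exact/esym/funrposBneg_at.
Qed.

Lemma Ex_distE g a e : Ex_summable g ->
  (`|Ex Sigma P z g - a%:E| <= e%:E)%E = (`|Exr g - a| <= e).
Proof. by move=> g_sum; rewrite Ex_Exr // -EFinB abse_EFin lee_fin. Qed.

Lemma Ex_summable_norm g : Ex_summable (fun w => `|g w|) = Ex_summable g.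
Proof. by rewrite /Ex_summable (eq_wesum (k := fun w => `|g w|)) // => w _; rewrite normr_id. Qed.

Lemma Ex_summable_le g k : Ex_summable k -> (forall w, Sigma w -> `|g w| <= k w) ->
  Ex_summable g.
Proof. by move=> k_sum gk; apply: wesum_fin_num k_sum => // w Sw; apply: le_trans (gk w Sw) (ler_norm _). Qed.

Lemma wesum0 : wesum (fun _ => 0) = 0%E.
Proof. by apply: esum1 => w _; rewrite mulr0. Qed.

Lemma Ex_summableD g h : Ex_summable g -> Ex_summable h -> Ex_summable (g \+ h).
Proof.
move=> g_sum h_sum; apply: (wesum_fin_num (k := fun w => `|g w| + `|h w|)) => // [w _|].
  exact: ler_normD.
by rewrite wesumD // fin_numD; apply/andP.
Qed.

Lemma Ex_summableZ c g : Ex_summable g -> Ex_summable (fun w => c * g w).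
Proof.
move=> g_sum; rewrite /Ex_summable (eq_wesum (k := fun w => `|c| * `|g w|)).
  by rewrite wesumZ // fin_numM.
by move=> w _; rewrite normrM.
Qed.

Lemma Ex_summable_sum (I : Type) (r : seq I) (F : I -> R * S -> R) :
  (forall i, Ex_summable (F i)) -> Ex_summable (fun w => \sum_(i <- r) F i w).
Proof.
move=> F_sum; elim: r => [|i r IHr].
  rewrite /Ex_summable (eq_wesum (k := fun _ => 0)) ?wesum0 // => w _.
  by rewrite big_nil normr0.
rewrite (_ : (fun w => _) = F i \+ fun w => \sum_(j <- r) F j w); first exact: Ex_summableD.
by apply/funext => w; rewrite big_cons.
Qed.

Lemma ExrD g h : Ex_summable g -> Ex_summable h -> Exr (g \+ h) = Exr g + Exr h.
Proof.
move=> g_sum h_sum; rewrite (Exr_posneg g_sum) (Exr_posneg h_sum).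
have [[gp_fin gn_fin] [hp_fin hn_fin]] := (Ex_summable_posneg g_sum, Ex_summable_posneg h_sum).
rewrite (@Exr_split _ (g^\+ \+ h^\+) (g^\- \+ h^\-)) ?wesumD ?fin_numD ?gp_fin ?gn_fin //.
- by rewrite !fineD //; lra.
- by move=> w; rewrite addr_ge0.
- by move=> w; rewrite addr_ge0.
- by move=> w _; rewrite /= -(funrposBneg_at g) -(funrposBneg_at h); lra.
Qed.

Lemma ExrN g : Ex_summable g -> Exr (fun w => - g w) = - Exr g.
Proof.
move=> g_sum; have [gp_fin gn_fin] := Ex_summable_posneg g_sum.
rewrite (Exr_posneg g_sum) (@Exr_split _ g^\- g^\+) // => [|w _]; first lra.
by rewrite -(funrposBneg_at g) opprB.
Qed.

Lemma ExrZ c g : Ex_summable g -> Exr (fun w => c * g w) = c * Exr g.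
Proof.
move=> g_sum; have [gp_fin gn_fin] := Ex_summable_posneg g_sum.
rewrite (Exr_posneg g_sum); have [c_ge0|c_lt0] := leP 0 c.
  rewrite (@Exr_split _ (fun w => c * g^\+ w) (fun w => c * g^\- w)) ?wesumZ ?fin_numM //.
  - by rewrite !fineM //=; ring.
  - by move=> w; rewrite mulr_ge0.
  - by move=> w; rewrite mulr_ge0.
  - by move=> w _; rewrite -mulrBr funrposBneg_at.
have Nc_ge0 : 0 <= - c by lra.
rewrite (@Exr_split _ (fun w => - c * g^\- w) (fun w => - c * g^\+ w)) ?wesumZ ?fin_numM //.
- by rewrite !fineM //=; ring.
- by move=> w; rewrite mulr_ge0.
- by move=> w; rewrite mulr_ge0.
- by move=> w _; rewrite -mulrBr -opprB funrposBneg_at mulrNN.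
Qed.

Lemma ler_Exr g h : Ex_summable g -> Ex_summable h ->
  (forall w, Sigma w -> g w <= h w) -> Exr g <= Exr h.
Proof.
move=> g_sum h_sum gh; rewrite (Exr_posneg g_sum) (Exr_posneg h_sum).
have [[gp_fin gn_fin] [hp_fin hn_fin]] := (Ex_summable_posneg g_sum, Ex_summable_posneg h_sum).
have : (wesum (g^\+ \+ h^\-)%R <= wesum (h^\+ \+ g^\-)%R)%E.
  apply: le_wesum => w Sw; have := gh w Sw.
  by rewrite /= -(funrposBneg_at g) -(funrposBneg_at h); lra.
rewrite !wesumD // -(fineK gp_fin) -(fineK gn_fin) -(fineK hp_fin) -(fineK hn_fin).
by rewrite -!EFinD lee_fin; lra.
Qed.

Lemma ler_norm_Exr g k : Ex_summable g -> Ex_summable k ->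
  (forall w, Sigma w -> `|g w| <= k w) -> `|Exr g| <= Exr k.
Proof.
move=> g_sum k_sum gk; rewrite ler_norml -ExrN //; apply/andP; split; apply: ler_Exr => //.
- apply: (Ex_summable_le k_sum) => w Sw.
  by rewrite normrN ger0_norm // (le_trans _ (gk w Sw)).
- by move=> w Sw; have := gk w Sw; rewrite ler_norml => /andP[].
- by move=> w Sw; apply: le_trans (ler_norm _) (gk w Sw).
Qed.

Lemma Exr_sum (I : Type) (r : seq I) (F : I -> R * S -> R) :
  (forall i, Ex_summable (F i)) ->
  Exr (fun w => \sum_(i <- r) F i w) = \sum_(i <- r) Exr (F i).
Proof.
move=> F_sum; elim: r => [|i r IHr].
  rewrite big_nil (@Exr_split _ (fun _ => 0) (fun _ => 0)) ?wesum0 ?subrr // => w _.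
  by rewrite big_nil.
rewrite big_cons -IHr -ExrD ?Ex_summable_sum //.
by congr Exr; apply/funext => w; rewrite big_cons.
Qed.

Lemma Ex_ge0E g : (forall w, 0 <= g w) -> Ex Sigma P z g = wesum g.
Proof.
move=> g_ge0; change (wesum (g^\+)%R - wesum (g^\-)%R = wesum g)%E.
rewrite (eq_wesum (h := (g^\+)%R) (k := g)) => [|w _]; last exact/max_idPl.
rewrite (eq_wesum (h := (g^\-)%R) (k := fun _ => 0)) ?wesum0 ?sube0 // => w _.
by apply/max_idPr; rewrite lerNl oppr0.
Qed.

Hypothesis P_sum : (\esum_(w in Sigma) (P z w)%:E = 1)%E.

Lemma wesum_cst c : 0 <= c -> wesum (fun _ => c) = c%:E.
Proof.
move=> c_ge0; rewrite (eq_wesum (k := fun _ => c * 1)) ?wesumZ // => [|w _]; last by rewrite mulr1.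
by rewrite [wesum _](eq_esum (b := fun w => (P z w)%:E)) ?P_sum ?mule1 // => w _; rewrite mulr1.
Qed.

Lemma Ex_summable_cst c : Ex_summable (fun _ => c).
Proof. by rewrite /Ex_summable wesum_cst. Qed.

Lemma Exr_cst c : Exr (fun _ => c) = c.
Proof.
have max_ge0 (a : R) : 0 <= Num.max a 0 by rewrite le_max lexx orbT.
rewrite (@Exr_split _ (fun _ => c)^\+ (fun _ => c)^\-) //= !wesum_cst ?max_ge0 //=.
exact: funrposBneg_at (fun _ => c) z.
Qed.

Lemma qxE j : qx Sigma P z j = wesum (fun w => (w.2 == j)%:R).
Proof.
rewrite /qx esum_mkcondr; apply: eq_esum => w _.
by case: eqP => w2j; [rewrite mem_set // mulr1 | rewrite memNset // mulr0].
Qed.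

Lemma qx_fin_num j : qx Sigma P z j \is a fin_num.
Proof.
rewrite qxE; apply: (wesum_fin_num (k := fun _ => 1)); rewrite ?wesum_cst // => w.
by case: eqP.
Qed.

Lemma qx_distE j a e : (`|qx Sigma P z j - a%:E| <= e%:E)%E = (`|fine (qx Sigma P z j) - a| <= e).
Proof. by rewrite -[qx _ _ _ _](fineK (qx_fin_num j)) -EFinB abse_EFin lee_fin. Qed.

Let indicator_summable j : Ex_summable (fun w => (w.2 == j)%:R).
Proof. by apply: (Ex_summable_le (Ex_summable_cst 1)) => w _; case: eqP; rewrite ?normr1 ?normr0. Qed.

Let snd_sum_indicator (h : S -> R) :
  (fun w : R * S => h w.2) = fun w => \sum_j h j * (w.2 == j)%:R.
Proof.
apply/funext => w; rewrite (bigD1 w.2) //= eqxx mulr1 big1 ?addr0 // => j /negbTE.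
by rewrite eq_sym => ->; rewrite mulr0.
Qed.

Lemma Ex_summable_snd (h : S -> R) : Ex_summable (fun w => h w.2).
Proof. by rewrite snd_sum_indicator; apply: Ex_summable_sum => j; exact: Ex_summableZ (indicator_summable j). Qed.

Lemma Exr_snd (h : S -> R) : Exr (fun w => h w.2) = \sum_j h j * fine (qx Sigma P z j).
Proof.
rewrite snd_sum_indicator Exr_sum => [|j]; last exact: Ex_summableZ (indicator_summable j).
apply: eq_bigr => j _; rewrite ExrZ // qxE.
rewrite (@Exr_split _ (fun w => (w.2 == j)%:R) (fun _ => 0)) ?wesum0 ?subr0 //.
  by rewrite -qxE qx_fin_num.
by move=> w _; rewrite subr0.
Qed.

Variables p Cp : R.
Hypothesis p_ge2 : 2 <= p.
Hypothesis jump_moment : (Ex Sigma P z (fun w => `|w.1 - z.1| `^ p)%R <= Cp%:E)%E.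

Let jump_pow (w : R * S) := `|w.1 - z.1| `^ p.

Let jump_pow_summable : Ex_summable jump_pow.
Proof.
have jump_pow_ge0 w : 0 <= jump_pow w by exact: powR_ge0.
rewrite /Ex_summable (eq_wesum (k := jump_pow)) => [|w _]; last exact: ger0_norm.
move: jump_moment; rewrite Ex_ge0E // => le_Cp.
by rewrite ge0_fin_numE ?wesum_ge0 // (le_lt_trans le_Cp) ?ltry.
Qed.

Let Exr_jump_pow_le : Exr jump_pow <= Cp.
Proof. by rewrite -lee_fin -Ex_Exr. Qed.

Let jump_sqr_le w : (w.1 - z.1) ^+ 2 <= 1 + jump_pow w.
Proof. by rewrite -real_normK ?num_real // sqr_le1D_powR. Qed.

Lemma Ex_summable_jump_sqr : Ex_summable (fun w => (w.1 - z.1) ^+ 2).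
Proof.
apply: (Ex_summable_le (k := (fun _ => 1) \+ jump_pow)) => [|w _].
  exact: Ex_summableD (Ex_summable_cst 1) jump_pow_summable.
by rewrite ger0_norm ?sqr_ge0 ?jump_sqr_le.
Qed.

Lemma Exr_jump_sqr_le : Exr (fun w => (w.1 - z.1) ^+ 2) <= 1 + Cp.
Proof.
have one_summable := Ex_summable_cst 1.
apply: (@le_trans _ _ (Exr ((fun _ => 1) \+ jump_pow))).
  apply: ler_Exr => //; [exact: Ex_summable_jump_sqr | exact: Ex_summableD].
by rewrite ExrD // Exr_cst lerD2l Exr_jump_pow_le.
Qed.

Lemma Ex_summable_jump : Ex_summable (fun w => w.1 - z.1).
Proof.
apply: (Ex_summable_le (k := (fun _ => 1) \+ fun w => (w.1 - z.1) ^+ 2)) => [|w _].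
  exact: Ex_summableD (Ex_summable_cst 1) Ex_summable_jump_sqr.
exact: normr_le1D_sqr.
Qed.

Section jump_sqr_domination.
Variables (e : R * S -> R) (c : R).
Hypothesis e_le : forall w, Sigma w -> `|e w| <= c * (1 + (w.1 - z.1) ^+ 2).

Let dom_summable : Ex_summable (fun w => c * (1 + (w.1 - z.1) ^+ 2)).
Proof. exact (Ex_summableZ c (Ex_summableD (Ex_summable_cst 1) Ex_summable_jump_sqr)). Qed.

Lemma Ex_summable_jump_sqr_dom : Ex_summable e.
Proof. exact: Ex_summable_le dom_summable e_le. Qed.

Lemma ler_norm_Exr_jump_sqr_dom : 0 <= c -> `|Exr e| <= c * (2 + Cp).
Proof.
move=> c_ge0; apply: le_trans (ler_norm_Exr Ex_summable_jump_sqr_dom dom_summable e_le) _.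
rewrite ExrZ; last exact: Ex_summableD (Ex_summable_cst 1) Ex_summable_jump_sqr.
rewrite ExrD ?Ex_summable_cst ?Ex_summable_jump_sqr // Exr_cst ler_wpM2l //.
by have := Exr_jump_sqr_le; lra.
Qed.

End jump_sqr_domination.

Section position_perturbation.
Variables (F : R * S -> R) (K : R).
Hypothesis F_near : forall w, Sigma w -> `|F w - w.1| <= K.
Hypothesis Fz_near : `|F z - z.1| <= K.

Let incr_split w : F w - F z = (w.1 - z.1) + ((F w - w.1) - (F z - z.1)).
Proof. by ring. Qed.

Let incr_err_le w : Sigma w -> `|(F w - w.1) - (F z - z.1)| <= 2 * K.
Proof.
by move=> Sw; apply: le_trans (ler_normB _ _) _; have := F_near Sw; have := Fz_near; lra.
Qed.

Lemma Ex_summable_incr : Ex_summable (fun w => F w - F z).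
Proof.
apply: (Ex_summable_le (k := (fun w => `|w.1 - z.1|) \+ fun _ => 2 * K)) => [|w Sw].
  apply: Ex_summableD; last exact: Ex_summable_cst.
  by rewrite Ex_summable_norm Ex_summable_jump.
by rewrite incr_split; apply: le_trans (ler_normD _ _) _; rewrite lerD2l incr_err_le.
Qed.

Lemma Ex_incr_sqr_le :
  (Ex Sigma P z (fun w => (F w - F z) ^+ 2)%R <= (2 * (1 + Cp) + 8 * K ^+ 2)%:E)%E.
Proof.
have sqr_le w : Sigma w -> (F w - F z) ^+ 2 <= 2 * (w.1 - z.1) ^+ 2 + 8 * K ^+ 2.
  move=> Sw; rewrite incr_split; have := incr_err_le Sw.
  set e := (F w - w.1) - (F z - z.1) => e_le.
  have : e ^+ 2 <= (2 * K) ^+ 2.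
    by rewrite -real_normK ?num_real // ler_sqr ?nnegrE //; have := normr_ge0 e; lra.
  by have := sqr_ge0 (w.1 - z.1 - e); nra.
have k_summable : Ex_summable ((fun w => 2 * (w.1 - z.1) ^+ 2) \+ fun _ => 8 * K ^+ 2).
  exact: Ex_summableD (Ex_summableZ 2 Ex_summable_jump_sqr) (Ex_summable_cst _).
have sqr_summable : Ex_summable (fun w => (F w - F z) ^+ 2).
  by apply: (Ex_summable_le k_summable) => w Sw; rewrite ger0_norm ?sqr_ge0 ?sqr_le.
rewrite Ex_Exr // lee_fin; apply: le_trans (ler_Exr sqr_summable k_summable sqr_le) _.
rewrite ExrD ?Ex_summable_cst ?(Ex_summableZ _ Ex_summable_jump_sqr) //.
rewrite Exr_cst ExrZ ?Ex_summable_jump_sqr //.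
by have := Exr_jump_sqr_le; lra.
Qed.

End position_perturbation.

Lemma Exr_incr_expansion (F : R * S -> R) (b Q : S -> R) (A : R) :
  Sigma z -> 0 < z.1 -> \sum_j Q j = 1 ->
  (forall w, Sigma w ->
    `|F w - w.1 - b w.2 / (2 * z.1)| <= A * (1 + (w.1 - z.1) ^+ 2) / z.1 ^+ 2) ->
  `|Exr (fun w => F w - F z) -
     (Exr (fun w => w.1 - z.1) + (2 * z.1)^-1 * \sum_j (b j - b z.2) * Q j)|
  <= (2 * z.1)^-1 * \sum_j `|b j| * `|fine (qx Sigma P z j) - Q j| + A * (3 + Cp) / z.1 ^+ 2.
Proof.
move=> Sz x_gt0 Q_sum F_expansion; set x := z.1 in x_gt0 F_expansion *.
set e := fun w => F w - w.1 - b w.2 / (2 * x).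
set c := A / x ^+ 2.
have ez_le : `|e z| <= c by have := F_expansion z Sz; rewrite subrr expr0n addr0 mulr1.
have c_ge0 : 0 <= c := le_trans (normr_ge0 _) ez_le.
have e_le w : Sigma w -> `|e w| <= c * (1 + (w.1 - x) ^+ 2).
  by move=> Sw; rewrite mulrAC; exact: F_expansion.
have e_summable := Ex_summable_jump_sqr_dom e_le.
have Exr_e_le := ler_norm_Exr_jump_sqr_dom e_le c_ge0.
rewrite (_ : (fun w => F w - F z) = ((fun w => w.1 - x) \+ e) \+ (fun w => b w.2 / (2 * x))
    \+ (fun _ => - (F z - x))); last by apply/funext => w; rewrite /e /=; ring.
have d_e_summable := Ex_summableD Ex_summable_jump e_summable.
have b_summable := Ex_summable_snd (fun j => b j / (2 * x)).
rewrite ExrD ?(Ex_summableD d_e_summable b_summable) ?Ex_summable_cst //.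
rewrite ExrD // ExrD ?Ex_summable_jump //.
rewrite Exr_cst (Exr_snd (fun j => b j / (2 * x))).
set SQ := \sum_j b j * fine (qx Sigma P z j); set SQQ := \sum_j b j * Q j.
have -> : \sum_j b j / (2 * x) * fine (qx Sigma P z j) = (2 * x)^-1 * SQ.
  by rewrite mulr_sumr; apply: eq_bigr => j _; rewrite mulrCA mulrA.
have -> : \sum_j (b j - b z.2) * Q j = SQQ - b z.2.
  by under eq_bigr do rewrite mulrBl; rewrite sumrB -mulr_sumr Q_sum mulr1.
have SQ_le : `|SQ - SQQ| <= \sum_j `|b j| * `|fine (qx Sigma P z j) - Q j|.
  rewrite -sumrB; apply: le_trans (ler_norm_sum _ _ _) _.
  by apply: ler_sum => j _; rewrite -mulrBr normrM.
have ezE : e z = F z - x - b z.2 / (2 * x) by [].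
rewrite (_ : _ - _ = (2 * x)^-1 * (SQ - SQQ) + (Exr e - e z)); last by rewrite ezE; ring.
apply: le_trans (ler_normD _ _) _; apply: lerD.
  by rewrite normrM gtr0_norm ?invr_gt0 ?mulr_gt0 // ler_wpM2l // invr_ge0 mulr_ge0 // ltW.
apply: le_trans (ler_normB _ _) _.
by rewrite (_ : A * (3 + Cp) / x ^+ 2 = c * (2 + Cp) + c); [exact: lerD | rewrite /c; ring].
Qed.

End real_expectation.

Lemma near_pinfty_onP {R : realType} (A Q : R -> Prop) :
  (exists M : R, forall x, A x -> M < x -> Q x) <-> \forall x \near +oo, A x -> Q x.
Proof.
split=> [[M MQ]|[M [_ MQ]]]; last by exists M => x Ax /MQ; apply.
by exists M; split=> [|x /[swap]]; [exact: num_real | exact: MQ].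
Qed.

Section Zfun_drift.
Local Set Implicit Arguments.
Local Unset Strict Implicit.
Context {R : realType} {S : finType}.
Variables (Sigma : set (R * S)) (P : R * S -> R * S -> R) (p Cp nu : R) (b : S -> R).
Hypothesis Sigma_ge0 : forall z, Sigma z -> 0 <= z.1.
Hypothesis P_ge0 : forall z w, 0 <= P z w.
Hypothesis P_sum : forall z, Sigma z -> (\esum_(w in Sigma) (P z w)%:E = 1)%E.
Hypothesis p_ge2 : 2 <= p.
Hypothesis jump_moment : forall z, Sigma z ->
  (Ex Sigma P z (fun w => `|w.1 - z.1| `^ p)%R <= Cp%:E)%E.
Hypothesis nu_gt0 : 0 < nu.

Let Zfun_near_position : exists K, forall w, Sigma w -> `|Zfun nu b w - w.1| <= K.
Proof.
have [K Zfun_y] := Zfun_subr_bounded b nu_gt0.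
by exists K => -[y j] Syj; apply: Zfun_y; exact: Sigma_ge0 Syj.
Qed.

Lemma Zfun_incr_summable z : Sigma z ->
  Ex_summable Sigma P z (fun w => Zfun nu b w - Zfun nu b z).
Proof.
have [K Zfun_K] := Zfun_near_position => Sz.
exact (Ex_summable_incr (P_ge0 z) (P_sum Sz) p_ge2 (jump_moment Sz) Zfun_K (Zfun_K z Sz)).
Qed.

Lemma Zfun_incr_sqr_bounded : exists B : R, forall z, Sigma z ->
  (Ex Sigma P z (fun w => (Zfun nu b w - Zfun nu b z) ^+ 2)%R <= B%:E)%E.
Proof.
have [K Zfun_K] := Zfun_near_position.
exists (2 * (1 + Cp) + 8 * K ^+ 2) => z Sz.
exact (Ex_incr_sqr_le (P_ge0 z) (P_sum Sz) p_ge2 (jump_moment Sz) Zfun_K (Zfun_K z Sz)).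
Qed.

Lemma Zfun_drift_expansion : exists2 T : R, 1 <= T & exists A : R,
  forall x i (Q : S -> R), T <= x -> Sigma (x, i) -> \sum_j Q j = 1 ->
  `|Exr Sigma P (x, i) (fun w => Zfun nu b w - Zfun nu b (x, i)) -
    (Exr Sigma P (x, i) (fun w => w.1 - x) + (2 * x)^-1 * \sum_j (b j - b i) * Q j)|
  <= (2^-1 * \sum_j `|b j| * `|fine (qx Sigma P (x, i) j) - Q j| + A / x) / x.
Proof.
have [K Zfun_K] := Zfun_near_position.
have [T T_ge1 [A Zfun_exp]] := Zfun_expansion b nu_gt0.
exists T => //; exists (A * (3 + Cp)) => x i Q T_le_x Sx Q_sum.
have Zfun_exp_x w : Sigma w ->
    `|Zfun nu b w - w.1 - b w.2 / (2 * x)| <= A * (1 + (w.1 - x) ^+ 2) / x ^+ 2.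
  by case: w => y j Syj; apply: Zfun_exp => //; exact: Sigma_ge0 Syj.
have x_gt0 : 0 < x by lra.
apply: le_trans (Exr_incr_expansion (P_ge0 _) (P_sum Sx) p_ge2 (jump_moment Sx) Sx x_gt0 Q_sum
  Zfun_exp_x) _.
by rewrite le_eqVlt; apply/orP; left; apply/eqP => /=; field; rewrite gt_eqF.
Qed.

Lemma Zfun_drift (Q : S -> S -> R) (c : S -> R) :
  (forall i, \sum_j Q i j = 1) ->
  (forall i j (eps : R), 0 < eps -> exists M : R, forall x, Sigma (x, i) -> M < x ->
      (`| qx Sigma P (x, i) j - (Q i j)%:E | <= eps%:E)%E) ->
  (forall i (eps : R), 0 < eps -> exists M : R, forall x, Sigma (x, i) -> M < x ->
      (`| Ex Sigma P (x, i) (fun w => w.1 - x)%R - (c i / x)%:E | <= (eps / x)%:E)%E) ->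
  forall i (eps : R), 0 < eps -> exists M : R, forall x, Sigma (x, i) -> M < x ->
    (`| Ex Sigma P (x, i) (fun w => Zfun nu b w - Zfun nu b (x, i))%R
        - (c i / x + (2 * x)^-1 * \sum_j (b j - b i) * Q i j)%:E | <= (eps / x)%:E)%E.
Proof.
move=> Q_sum q_lim mu_lim i eps eps_gt0.
have [T T_ge1 [A drift]] := Zfun_drift_expansion.
pose B := \sum_j `|b j|; have B_ge0 : 0 <= B by rewrite sumr_ge0.
pose eps_q := eps / (3 * (B + 1)); have eps_q_gt0 : 0 < eps_q by rewrite divr_gt0 //; lra.
apply/near_pinfty_onP; near=> x => Sx.
have T_le_x : T <= x by near: x; apply: nbhs_pinfty_ge; exact: num_real.
have A_le : 3 * A / eps <= x by near: x; apply: nbhs_pinfty_ge; exact: num_real.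
have mu_x : (`|Ex Sigma P (x, i) (fun w => w.1 - x)%R - (c i / x)%:E| <= (eps / 3 / x)%:E)%E.
  by move: Sx; near: x; apply/near_pinfty_onP/mu_lim; rewrite divr_gt0.
have q_x : forall j, Sigma (x, i) -> (`|qx Sigma P (x, i) j - (Q i j)%:E| <= eps_q%:E)%E.
  by near: x; apply: filter_forall => j; apply/near_pinfty_onP/q_lim.
have x_gt0 : 0 < x by lra.
have jump_summable := Ex_summable_jump (P_ge0 _) (P_sum Sx) p_ge2 (jump_moment Sx).
rewrite Ex_distE ?Zfun_incr_summable //; move: mu_x; rewrite Ex_distE // => mu_x.
have Err_le : \sum_j `|b j| * `|fine (qx Sigma P (x, i) j) - Q i j| <= eps / 3.
  apply: (@le_trans _ _ (B * eps_q)).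
    rewrite mulr_suml; apply: ler_sum => j _; apply: ler_wpM2l => //.
    by have := q_x j Sx; rewrite (qx_distE (P_ge0 _) (P_sum Sx)).
  by rewrite mulrA ler_pdivrMr ?mulr_gt0 //; lra.
have A_x : A / x <= eps / 3.
  by rewrite ler_pdivrMr //; move: A_le; rewrite ler_pdivrMr //; lra.
have err_x : (2^-1 * \sum_j `|b j| * `|fine (qx Sigma P (x, i) j) - Q i j| + A / x) / x
    <= 2 * eps / 3 / x by rewrite ler_pM2r ?invr_gt0 //; lra.
have := drift x i (Q i) T_le_x Sx (Q_sum i).
move: mu_x; rewrite !ler_norml => /andP[? ?] /andP[? ?]; apply/andP; split; lra.
Unshelve. all: by end_near.
Qed.

End Zfun_drift.

Theorem lemma4p5 (R : realType) (S : finType) (s0 : S)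
  (Sigma : set (R * S)) (P : R * S -> R * S -> R)
  (p Cp : R) (Q : S -> S -> R) (c s2 b : S -> R) (nu : R) :
  (forall z, Sigma z -> 0 <= z.1) ->
  locally_finite Sigma ->
  markov_kernel Sigma P ->
  irreducible_chain Sigma P ->
  (forall k (M : R), exists x, Sigma (x, k) /\ M < x) ->
  2 < p ->
  (forall z, Sigma z -> (Ex Sigma P z (fun w => powR `|w.1 - z.1| p)%R <= Cp%:E)%E) ->
  irreducible_stochastic Q ->
  (forall i j (eps : R), 0 < eps -> exists M : R, forall x, Sigma (x, i) -> M < x ->
      (`| qx Sigma P (x, i) j - (Q i j)%:E | <= eps%:E)%E) ->
  (forall i, 0 <= s2 i) -> (exists i, s2 i != 0) ->
  (forall i (eps : R), 0 < eps -> exists M : R, forall x, Sigma (x, i) -> M < x ->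
      (`| Ex Sigma P (x, i) (fun w => w.1 - x)%R - (c i / x)%:E | <= (eps / x)%:E)%E) ->
  (forall i (eps : R), 0 < eps -> exists M : R, forall x, Sigma (x, i) -> M < x ->
      (`| Ex Sigma P (x, i) (fun w => (w.1 - x) ^+ 2)%R - (s2 i)%:E | <= eps%:E)%E) ->
  0 < nu -> nu <= p ->
  (forall i (eps : R), 0 < eps -> exists M : R, forall x, Sigma (x, i) -> M < x ->
      (`| Ex Sigma P (x, i) (fun w => Zfun nu b w - Zfun nu b (x, i))%R
          - (c i / x + (2 * x)^-1 * \sum_(j : S) (b j - b i) * Q i j)%:E |
        <= (eps / x)%:E)%E)
  /\
  (exists B : R, forall z, Sigma z ->
      (Ex Sigma P z (fun w => (Zfun nu b w - Zfun nu b z) ^+ 2)%R <= B%:E)%E).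
Proof.
move=> Sigma_ge0 _ [P_ge0 [_ P_sum]] _ _ p_gt2 jump_moment [_ [Q_sum _]] q_lim _ _ mu_lim _
  nu_gt0 _.
have p_ge2 : 2 <= p by lra.
split; first exact (Zfun_drift b Sigma_ge0 P_ge0 P_sum p_ge2 jump_moment nu_gt0 Q_sum q_lim mu_lim).
exact (Zfun_incr_sqr_bounded b Sigma_ge0 P_ge0 P_sum p_ge2 jump_moment nu_gt0).
Qed.
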